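(* Let $M$ be a commutative free monoid on countably many generators $a_1,a_2,\ldots$, with a monoid homomorphism $\deg:M\to(\mathbb Z_{\ge0},+)$ such that $\deg^{-1}(0)=\{1\}$ and $\deg^{-1}(d)$ is finite for all $d>0$. For every type $\tau$, in the monoid ring $\mathbb Z[M]$ (resp. $\mathbb Z[M]\otimes\mathbb Q$) $$S_\tau=\sum_{\lambda}a(\lambda,\tau)X_\lambda\qquad\text{and}\qquad X_\tau=\sum_\lambda a^{-1}(\lambda,\tau)S_\lambda,$$ the sums over types $\lambda$ of the same degree as $\tau$. In particular $\#\{b\in M: b\text{ has type }\lambda\}=\sum_\tau a^{-1}(\tau,\lambda)\prod_{(k,m)\in\tau}\#\{b\in M:\deg b=k\}$.
   Context: Each $b\in M$ can be written uniquely up to order as $b=a_{i_1}^{k_1}\cdots a_{i_n}^{k_n}$ with distinct generators and $k_j\ge1$; its type is the multiset $\{(\deg a_{i_1},k_1),\dots,(\deg a_{i_n},k_n)\}$. In general a type of degree $d$ is a finite multiset of pairs $(b,m)$ of positive integers with $\sum bm=d$. $\psi_m:\mathbb Z[M]\to\mathbb Z[M]$ is the ring endomorphism with $\psi_m(a_k)=a_k^m$. $X_\tau\in\mathbb Z[M]$ is the sum of all elements of $M$ of type $\tau$, and $S_\tau=\prod_{(k,m)\in\tau}\psi_m\big(\sum_{b\in\deg^{-1}(k)}b\big)$. For types $\lambda=\{(b_i,m_i)\}_{i\le r}$ and $\tau=\{(c_j,n_j)\}_{j\le s}$ (fixed orderings), an arrangement of $\lambda$ into $\tau$ is an $r\times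 s$ non-negative integer matrix $A$ with $A\vec n=\vec m$ and $A^T\vec b=\vec c$; $a(\lambda,\tau)$ is the number of arrangements. The matrix $(a(\lambda,\tau))$ indexed by types of degree $d$ is invertible over $\mathbb Q$, with inverse entries $a^{-1}(\lambda,\tau)$. *)

From HB Require Import structures.
From mathcomp Require Import all_boot all_order all_algebra.
From mathcomp Require Import finmap.
From mathcomp.multinomials Require Import monalg.

Set Implicit Arguments.
Unset Strict Implicit.
Unset Printing Implicit Defensive.

Import GRing.Theory.
Local Open Scope ring_scope.

(* M = the commutative free monoid on countably many generators
   a_1, a_2, ...; generator a_(i+1) is [ucm i], the exponent of a_(i+1)
   in b : M is [b i], product is [mulcm], unit is [onecm]. *)
Notation M := {cmonom nat}.

(* A "type" is a finite multiset of pairs (b,m); it is represented by a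
   sequence, two sequences denoting the same type iff they are [perm_eq]. *)
Definition is_type (t : seq (nat * nat)) : bool :=
  all (fun p => (0 < p.1)%N && (0 < p.2)%N) t.

Definition tdeg (t : seq (nat * nat)) : nat := (\sum_(p <- t) p.1 * p.2)%N.

Definition type_of (deg : M -> nat) (b : M) : seq (nat * nat) :=
  [seq (deg (ucm i), b i) | i <- finsupp b].

Fixpoint msets_w (P : seq (nat * nat)) (d : nat) : seq (seq (nat * nat)) :=
  match P with
  | [::] => if d == 0%N then [:: [::]] else [::]
  | p :: P' =>
      flatten [seq [seq nseq k p ++ t | t <- msets_w P' (d - k * (p.1 * p.2))]
              | k <- iota 0 d.+1 & (k * (p.1 * p.2) <= d)%N]
  end.

(* one representative of every type of degree d (no repetitions) *)
Definition types (d : nat) : seq (seq (nat * nat)) :=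
  msets_w [seq (b, m) | b <- iota 1 d, m <- iota 1 d] d.

(* a(l, t): number of arrangements of l = {(b_i,m_i)} into t = {(c_j,n_j)},
   i.e. r x s matrices A of nonnegative integers with A n = m and A^T b = c.
   (For types, every entry satisfies A_ij <= m_i, so bounding the entries by
   sum_i m_i loses nothing.) *)
Definition arr (l t : seq (nat * nat)) : nat :=
  #|[set A : {ffun 'I_(size l) * 'I_(size t) -> 'I_((\sum_(p <- l) p.2).+1)} |
      [forall i : 'I_(size l),
         (\sum_(j < size t) A (i, j) * (nth (0, 0) t j).2 == (nth (0, 0) l i).2)%N]
   && [forall j : 'I_(size t),
         (\sum_(i < size l) A (i, j) * (nth (0, 0) l i).1 == (nth (0, 0) t j).1)%N]]|.

Definition amx (d : nat) : 'M[rat]_(size (types d)) :=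
  \matrix_(i, j) (arr (nth [::] (types d) i) (nth [::] (types d) j))%:R.

Definition type_idx (d : nat) (l : seq (nat * nat)) : option 'I_(size (types d)) :=
  insub (find (perm_eq l) (types d)).

Definition ainv (d : nat) (l t : seq (nat * nat)) : rat :=
  match type_idx d l, type_idx d t with
  | Some i, Some j => invmx (amx d) i j
  | _, _ => 0
  end.

Section Ring.
Variable R : comNzRingType.

(* psi_m : ring endomorphism of R[M] with psi_m(a_k) = a_k^m,
   i.e. the linear extension of b |-> b^m *)
Definition psi (m : nat) (g : {malg R[M]}) : {malg R[M]} :=
  \sum_(k <- msupp g) << g@_k *g expcmn k m >>.

(* fib enumerates the (finite) fibers of deg *)
Variables (deg : M -> nat) (fib : nat -> seq M).

(* X_t: sum of all elements of M of type t (these all have degree tdeg t) *)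
Definition Xt (t : seq (nat * nat)) : {malg R[M]} :=
  \sum_(b <- fib (tdeg t) | perm_eq (type_of deg b) t) << b >>.

Definition St (t : seq (nat * nat)) : {malg R[M]} :=
  \prod_(p <- t) psi p.2 (\sum_(b <- fib p.1) << b >>).

End Ring.

From HB Require Import structures.
From mathcomp Require Import all_boot all_order all_algebra.
From mathcomp Require Import finmap.
From mathcomp.multinomials Require Import monalg.
From mathcomp Require Import zify.
Import Order.TTheory GRing.Theory Num.Theory.
Local Open Scope ring_scope.
Set Implicit Arguments.
Unset Strict Implicit.
Unset Printing Implicit Defensive.

(* The coefficient of a monomial x in S_t = prod_j psi_(n_j) (sum_(deg b = c_j) b) counts the
   tuples (b_j)_j with deg b_j = c_j and prod_j b_j^(n_j) = x.  Recording as entry (i, j) the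
   exponent in b_j of the i-th generator dividing x turns such a tuple into an arrangement of the
   type of x into t, and conversely, so S_t = sum_l a(l, t) X_l.  A nonzero a(l, t) can only
   lower the total multiplicity sum m and raise the total base sum b, with equality in both only
   when l = t; hence (a(l, t)) is triangular with nonzero diagonal, thus invertible, and
   inverting it expresses X_t through the S_l.  The augmentation b |-> 1 turns X_l into the
   number of elements of type l and S_t into a product of fibre sizes. *)

Lemma sum_nat_of_bool (T : Type) (s : seq T) (a : pred T) :
  (\sum_(x <- s) a x)%N = count a s.
Proof. by rewrite -sum1_count [RHS]big_mkcond. Qed.

Lemma sum_ord_nth (T : Type) (x0 : T) (F : T -> nat) (s : seq T) :
  (\sum_(x <- s) F x = \sum_(i < size s) F (nth x0 s i))%N.
Proof. by rewrite (big_nth x0) big_mkord. Qed.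

Lemma nth_ord_inj (T : eqType) (x0 : T) (s : seq T) n : size s = n -> uniq s ->
  injective (fun k : 'I_n => nth x0 s k).
Proof. by move=> <- s_uniq k k' /eqP; rewrite nth_uniq // => /eqP/val_inj. Qed.

Lemma nth_ord_onto (T : eqType) (x0 : T) (s : seq T) n y : size s = n -> y \in s ->
  exists k : 'I_n, nth x0 s k = y.
Proof.
by move=> <-; rewrite -index_mem => lt_y; exists (Ordinal lt_y); rewrite nth_index // -index_mem.
Qed.

Lemma count_le1_nth_inj (T : eqType) (x0 : T) (a : pred T) s i j :
  (count a s <= 1)%N -> (i < size s)%N -> (j < size s)%N ->
  a (nth x0 s i) -> a (nth x0 s j) -> i = j.
Proof.
have count_gt0 s' k : (k < size s')%N -> a (nth x0 s' k) -> (0 < count a s')%N.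
  by move=> lt_k ak; rewrite -has_count; apply/hasP; exists (nth x0 s' k); rewrite ?mem_nth.
elim: s i j => [|x s IH] [|i] [|j] //= c1 lt_i lt_j ai aj.
- by move: c1; rewrite ai add1n ltnS leqn0 (gtn_eqF (count_gt0 _ _ lt_j aj)).
- by move: c1; rewrite aj add1n ltnS leqn0 (gtn_eqF (count_gt0 _ _ lt_i ai)).
- by rewrite (IH i j) // (leq_trans _ c1) // leq_addl.
Qed.

Lemma find_count_le1 (T : eqType) (x0 : T) (a : pred T) s i :
  (count a s <= 1)%N -> (i < size s)%N -> a (nth x0 s i) -> find a s = i.
Proof.
move=> c1 lt_i ai; have has_a : has a s by apply/hasP; exists (nth x0 s i); rewrite ?mem_nth.
by apply: (count_le1_nth_inj (x0 := x0) c1) => //; rewrite ?nth_find // -has_find.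
Qed.

Lemma card_in_bij (T1 T2 : finType) (A : {set T1}) (B : {set T2})
    (f : T1 -> T2) (g : T2 -> T1) :
  {in A, forall x, f x \in B} -> {in B, forall y, g y \in A} ->
  {in A, cancel f g} -> {in B, cancel g f} -> #|A| = #|B|.
Proof.
move=> fAB gBA fK gK; apply/eqP; rewrite eqn_leq; apply/andP; split.
  rewrite -(card_in_imset (can_in_inj fK)); apply/subset_leq_card/subsetP.
  by move=> _ /imsetP[x xA ->]; exact: fAB.
rewrite -(card_in_imset (can_in_inj gK)); apply/subset_leq_card/subsetP.
by move=> _ /imsetP[y yB ->]; exact: gBA.
Qed.

Lemma leqif_sum_pmull (I : finType) (c n : I -> nat) :
  (forall j, 0 < c j)%N -> (forall j, 0 < n j)%N ->
  (\sum_j n j <= \sum_j c j * n j ?= iff [forall j, c j == 1%N])%N.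
Proof.
move=> c_gt0 n_gt0; apply: leqif_sum => j _; apply/leqifP.
case: ifPn => [/eqP ->|c_neq1]; first by rewrite mul1n.
by rewrite ltn_Pmull // ltn_neqAle eq_sym c_neq1 c_gt0.
Qed.

Lemma weighted_sum_eq1 (I : finType) (a f : I -> nat) j :
  (\sum_k a k = 1)%N -> (0 < a j)%N -> (\sum_k a k * f k = f j)%N.
Proof.
move=> /eqP /sum_nat_eq1[k [_ ak1 a0]] aj_gt0.
have -> : j = k by apply: contraTeq aj_gt0 => /a0 -> //.
by rewrite (bigD1 k) //= ak1 mul1n big1 ?addn0 // => k' /a0 -> //.
Qed.

Lemma perm_eq_matching (T : eqType) (x0 : T) (l t : seq T)
    (a : 'I_(size l) -> 'I_(size t) -> nat) :
  (forall i, \sum_j a i j = 1)%N -> (forall j, \sum_i a i j = 1)%N ->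
  (forall i j, 0 < a i j -> nth x0 l i = nth x0 t j)%N -> perm_eq l t.
Proof.
move=> row1 col1 a_match; apply/permP => q.
rewrite -!sum_nat_of_bool !(sum_ord_nth x0).
transitivity (\sum_i \sum_j a i j * q (nth x0 l i))%N.
  by apply: eq_bigr => i _; rewrite -big_distrl /= row1 mul1n.
rewrite exchange_big /=; apply: eq_bigr => j _.
rewrite -[RHS]mul1n -(col1 j) big_distrl /=; apply: eq_bigr => i _.
by case: (posnP (a i j)) => [->|/a_match ->].
Qed.

Lemma perm_nseq_catP (T : eqType) (p : T) k (u t : seq T) : p \notin u ->
  perm_eq t (nseq k p ++ u) -> k = count_mem p t /\ perm_eq (filter (predC1 p) t) u.
Proof.
move=> pNu tE; split.
  by rewrite (permP tE) count_cat count_nseq /= eqxx mul1n (count_memPn pNu) addn0.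
apply: perm_trans (perm_filter _ tE) _.
rewrite filter_cat filter_nseq /= eqxx mul0n /=.
suff -> : filter (predC1 p) u = u by [].
apply/all_filterP/allP => q qu /=; apply: contraNneq pNu => <-; exact: qu.
Qed.

Section CmonomEval.
Variable I : choiceType.
Implicit Types (x : {cmonom I}) (i : I).

Lemma expcmnE x n i : expcmn x n i = (n * x i)%N.
Proof.
case: n => [|n]; first by rewrite /expcmn /= onecmE.
elim: n => [|n IH]; first by rewrite /expcmn /= mul1n.
by rewrite [expcmn x n.+2]/expcmn /= -/(expcmn x n.+1) mulcmE IH mulSn.
Qed.

Lemma bigcmE (T : Type) (r : seq T) (P : pred T) (F : T -> {cmonom I}) i :
  (\big[@mulcm I/@onecm I]_(j <- r | P j) F j) i = (\sum_(j <- r | P j) F j i)%N.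
Proof.
by apply: (big_morph (fun x : {cmonom I} => x i)); [move=> *; rewrite mulcmE | rewrite onecmE].
Qed.

Variables (r : nat) (g : 'I_r -> I).

Lemma prod_ucmE (e : 'I_r -> nat) i :
  (\big[@mulcm I/@onecm I]_(k < r) expcmn (ucm (g k)) (e k)) i
  = (\sum_(k < r) e k * (g k == i))%N.
Proof. by rewrite bigcmE; apply: eq_bigr => k _; rewrite expcmnE ucmE. Qed.

Hypothesis g_inj : injective g.

Lemma prod_ucmE_image (e : 'I_r -> nat) k :
  (\big[@mulcm I/@onecm I]_(k' < r) expcmn (ucm (g k')) (e k')) (g k) = e k.
Proof.
rewrite prod_ucmE (bigD1 k) //= eqxx muln1 big1 ?addn0 // => k' /negbTE nkk'.
by rewrite (inj_eq g_inj) nkk' muln0.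
Qed.

Lemma prod_ucmE_out (e : 'I_r -> nat) i : (forall k, g k != i) ->
  (\big[@mulcm I/@onecm I]_(k < r) expcmn (ucm (g k)) (e k)) i = 0%N.
Proof. by move=> gNi; rewrite prod_ucmE big1 // => k _; rewrite (negbTE (gNi k)) muln0. Qed.

Lemma cmonom_prod_ucm x : (forall i, x i != 0%N -> exists k, g k = i) ->
  x = \big[@mulcm I/@onecm I]_(k < r) expcmn (ucm (g k)) (x (g k)).
Proof.
move=> supp_x; apply/eqP/cmP => i.
case: (boolP [exists k, g k == i]) => [/existsP[k /eqP <-]|/existsPn gNi].
  by rewrite prod_ucmE_image.
rewrite prod_ucmE_out //; apply/eqP; apply: contraT => /supp_x[k gk].
by have := gNi k; rewrite gk eqxx.
Qed.

End CmonomEval.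

Lemma tdeg_cat t t' : tdeg (t ++ t') = (tdeg t + tdeg t')%N.
Proof. by rewrite /tdeg big_cat. Qed.

Lemma tdeg_nseq k p : tdeg (nseq k p) = (k * (p.1 * p.2))%N.
Proof. by rewrite /tdeg big_nseq; elim: k => //= k ->; rewrite mulSn. Qed.

Lemma msets_w_cons p P d : msets_w (p :: P) d =
  flatten [seq [seq nseq k p ++ t | t <- msets_w P (d - k * (p.1 * p.2))]
          | k <- iota 0 d.+1 & (k * (p.1 * p.2) <= d)%N].
Proof. by []. Qed.

Lemma msets_w_mem P d t : t \in msets_w P d -> {subset t <= P} /\ tdeg t = d.
Proof.
elim: P d t => [|p P IH] d t.
  by rewrite /=; case: eqP => [->|_]; rewrite ?inE // => /eqP ->; split; rewrite ?/tdeg ?big_nil.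
rewrite msets_w_cons; case/flatten_mapP => k; rewrite mem_filter => /andP[le_kd _].
case/mapP => u /IH[uP du] ->.
split; last by rewrite tdeg_cat tdeg_nseq du subnKC.
move=> q; rewrite mem_cat inE => /orP[/nseqP[-> _]|/uP ->]; by rewrite ?eqxx ?orbT.
Qed.

Lemma msets_w_exists P t : (forall q, q \in P -> 0 < q.1 * q.2)%N ->
  {subset t <= P} -> exists2 u, u \in msets_w P (tdeg t) & perm_eq t u.
Proof.
elim: P t => [|p P IH] t P_gt0 tP.
  case: t tP => [_|q t /(_ q (mem_head _ _))] //.
  by exists [::]; rewrite ?inE /tdeg ?big_nil.
set k := count_mem p t; set t' := filter (predC1 p) t.
have tE : perm_eq t (nseq k p ++ t').
  rewrite /k -size_filter; have /all_pred1P <- := filter_all (pred1 p) t.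
  by rewrite perm_sym perm_filterC.
have t'P : {subset t' <= P}.
  by move=> q; rewrite mem_filter => /andP[/= /negbTE qNp /tP]; rewrite inE qNp.
have [|u uP t'u] := IH t' _ t'P; first by move=> q qP; apply: P_gt0; rewrite inE qP orbT.
have deg_t : tdeg t = (k * (p.1 * p.2) + tdeg t')%N.
  by rewrite -tdeg_nseq -tdeg_cat /tdeg (perm_big _ tE).
exists (nseq k p ++ u); last by apply: perm_trans tE _; rewrite perm_cat2l.
rewrite msets_w_cons; apply/flatten_mapP; exists k.
  rewrite mem_filter mem_iota /= deg_t leq_addr ltnS.
  apply: leq_trans (leq_addr _ _) ; apply: leq_pmulr; exact/P_gt0/mem_head.
by apply/mapP; exists u; rewrite // deg_t addKn.
Qed.

Lemma msets_w_count P d t : uniq P -> (forall q, q \in P -> 0 < q.1 * q.2)%N ->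
  (count (perm_eq t) (msets_w P d) <= 1)%N.
Proof.
elim: P d t => [|p P IH] d t.
  by move=> _ _; apply: leq_trans (count_size _ _) _; rewrite /=; case: (d == 0%N).
case/andP=> pNP P_uniq P_gt0; set c := count_mem p t.
have P'_gt0 q : q \in P -> (0 < q.1 * q.2)%N by move=> qP; apply: P_gt0; rewrite inE qP orbT.
rewrite msets_w_cons count_flatten -map_comp sumnE big_map.
set ks := [seq k <- _ | _].
apply: (@leq_trans (\sum_(k <- ks) (k == c))); last first.
  by rewrite sum_nat_of_bool count_uniq_mem ?leq_b1 // filter_uniq ?iota_uniq.
apply: leq_sum => k _ /=; rewrite count_map.
set t' := filter (predC1 p) t; set ms := msets_w P _.
rewrite (@eq_in_count _ _ (fun u => [&& perm_eq t (nseq k p ++ u), k == c & perm_eq t' u])).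
  apply: leq_trans (@sub_count _ _ (fun u => (k == c) && perm_eq t' u) _ _) _.
    by move=> u /and3P[_ -> ->].
  by case: (k == c); [exact: IH | rewrite (@eq_count _ _ pred0) ?count_pred0].
move=> u /msets_w_mem[uP _] /=; case tE: (perm_eq _ _) => //=.
have pNu : p \notin u by apply: contra pNP => /uP.
by have [-> ->] := perm_nseq_catP pNu tE; rewrite eqxx.
Qed.

Lemma type_pairs_gt0 d q : q \in [seq (b, m) | b <- iota 1 d, m <- iota 1 d] ->
  [&& 0 < q.1, 0 < q.2 & 0 < q.1 * q.2]%N.
Proof.
case/allpairsP => -[b m] [/=]; rewrite !mem_iota => /andP[b_gt0 _] /andP[m_gt0 _] ->.
by rewrite /= b_gt0 m_gt0 muln_gt0 b_gt0.
Qed.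

Lemma types_mem d t : t \in types d -> is_type t /\ tdeg t = d.
Proof.
case/msets_w_mem => tP ->; split => //; apply/allP => q /tP /type_pairs_gt0.
by case/and3P => -> ->.
Qed.

Lemma types_count d t : (count (perm_eq t) (types d) <= 1)%N.
Proof.
apply: msets_w_count; last by move=> q /type_pairs_gt0 /and3P[].
by apply: allpairs_uniq; rewrite ?iota_uniq // => -[? ?] [? ?].
Qed.

Lemma types_exists t : is_type t -> exists2 u, u \in types (tdeg t) & perm_eq t u.
Proof.
move=> t_type; apply: msets_w_exists; first by move=> q /type_pairs_gt0 /and3P[].
move=> q qt; have /andP[q1_gt0 q2_gt0] := allP t_type q qt.
have le_qt : (q.1 * q.2 <= tdeg t)%N by rewrite /tdeg (big_rem q) //= leq_addr.
apply/allpairsP; exists q; rewrite !mem_iota /= q1_gt0 q2_gt0 -surjective_pairing !add1n !ltnS.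
by split=> //; apply: leq_trans le_qt; rewrite ?leq_pmulr ?leq_pmull.
Qed.

Lemma types_nth_perm_inj d (i j : 'I_(size (types d))) :
  perm_eq (nth [::] (types d) i) (nth [::] (types d) j) -> i = j.
Proof.
move=> ij; apply/val_inj/(count_le1_nth_inj (x0 := [::]) (types_count d (nth [::] (types d) i)));
  by [exact: ltn_ord | exact: perm_refl | exact: ij].
Qed.

Lemma type_idx_nth d (i : 'I_(size (types d))) : type_idx d (nth [::] (types d) i) = Some i.
Proof.
have find_i : find (perm_eq (nth [::] (types d) i)) (types d) = i.
  exact: (find_count_le1 (x0 := [::]) (types_count d _)).
by rewrite /type_idx insubT ?find_i // => lt_i; congr Some; apply: ord_inj.
Qed.

Lemma type_idxP t : is_type t ->
  exists2 j, type_idx (tdeg t) t = Some j & perm_eq t (nth [::] (types (tdeg t)) j).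
Proof.
move=> t_type; have [u u_types tu] := types_exists t_type.
have has_t : has (perm_eq t) (types (tdeg t)) by apply/hasP; exists u.
have lt_find : (find (perm_eq t) (types (tdeg t)) < size (types (tdeg t)))%N by rewrite -has_find.
exists (Ordinal lt_find); last exact: nth_find.
by rewrite /type_idx insubT /=; congr Some; apply: ord_inj.
Qed.

Definition is_arrangement (l t : seq (nat * nat)) B
    (A : {ffun 'I_(size l) * 'I_(size t) -> 'I_B}) : bool :=
  [forall i : 'I_(size l),
     (\sum_(j < size t) A (i, j) * (nth (0, 0) t j).2 == (nth (0, 0) l i).2)%N]
  && [forall j : 'I_(size t),
     (\sum_(i < size l) A (i, j) * (nth (0, 0) l i).1 == (nth (0, 0) t j).1)%N].

Definition sum_mult (l : seq (nat * nat)) : nat := \sum_(p <- l) p.2.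
Definition sum_base (l : seq (nat * nat)) : nat := \sum_(p <- l) p.1.

Lemma arrE l t : arr l t = #|[set A | @is_arrangement l t (sum_mult l).+1 A]|.
Proof. by []. Qed.

Lemma is_type_nth l i : is_type l -> (i < size l)%N ->
  (0 < (nth (0, 0) l i).1)%N /\ (0 < (nth (0, 0) l i).2)%N.
Proof. by move=> /allP l_type lt_i; have /andP[] := l_type _ (mem_nth (0, 0) lt_i). Qed.

Section Arrangement.
Variables (l t : seq (nat * nat)) (B : nat).
Variable A : {ffun 'I_(size l) * 'I_(size t) -> 'I_B}.
Hypotheses (l_type : is_type l) (t_type : is_type t) (A_arr : is_arrangement A).

Local Notation b i := (nth (0, 0) l i).1.
Local Notation m i := (nth (0, 0) l i).2.
Local Notation c j := (nth (0, 0) t j).1.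
Local Notation n j := (nth (0, 0) t j).2.

Definition row_sum i : nat := \sum_j A (i, j).
Definition col_sum j : nat := \sum_i A (i, j).

Lemma arrangement_row i : (\sum_j A (i, j) * n j)%N = m i.
Proof. by case/andP: A_arr => /forallP/(_ i)/eqP. Qed.

Lemma arrangement_col j : (\sum_i A (i, j) * b i)%N = c j.
Proof. by case/andP: A_arr => _ /forallP/(_ j)/eqP. Qed.

Lemma row_sum_gt0 i : (0 < row_sum i)%N.
Proof.
have [_ m_gt0] := is_type_nth l_type (ltn_ord i).
rewrite lt0n; apply: contraTneq m_gt0 => /eqP; rewrite sum_nat_eq0 => /forallP A0.
by rewrite -arrangement_row big1 // => j _; rewrite (eqP (A0 j)).
Qed.

Lemma col_sum_gt0 j : (0 < col_sum j)%N.
Proof.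
have [c_gt0 _] := is_type_nth t_type (ltn_ord j).
rewrite lt0n; apply: contraTneq c_gt0 => /eqP; rewrite sum_nat_eq0 => /forallP A0.
by rewrite -arrangement_col big1 // => i _; rewrite (eqP (A0 i)).
Qed.

Lemma sum_mult_arrangement :
  (sum_mult t <= sum_mult l ?= iff [forall j, col_sum j == 1%N])%N.
Proof.
have -> : sum_mult l = (\sum_j col_sum j * n j)%N.
  rewrite /sum_mult (sum_ord_nth (0, 0)) (eq_bigr _ (fun i _ => esym (arrangement_row i))).
  by rewrite exchange_big; apply: eq_bigr => j _; rewrite big_distrl.
rewrite /sum_mult (sum_ord_nth (0, 0)); apply: leqif_sum_pmull => [|j]; first exact: col_sum_gt0.
by have [] := is_type_nth t_type (ltn_ord j).
Qed.

Lemma sum_base_arrangement :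
  (sum_base l <= sum_base t ?= iff [forall i, row_sum i == 1%N])%N.
Proof.
have -> : sum_base t = (\sum_i row_sum i * b i)%N.
  rewrite /sum_base (sum_ord_nth (0, 0)) (eq_bigr _ (fun j _ => esym (arrangement_col j))).
  by rewrite exchange_big; apply: eq_bigr => i _; rewrite big_distrl.
rewrite /sum_base (sum_ord_nth (0, 0)); apply: leqif_sum_pmull => [|i]; first exact: row_sum_gt0.
by have [] := is_type_nth l_type (ltn_ord i).
Qed.

Lemma arrangement_perm :
  [forall j, col_sum j == 1%N] -> [forall i, row_sum i == 1%N] -> perm_eq l t.
Proof.
move=> /forallP col1 /forallP row1.
apply: (perm_eq_matching (x0 := (0, 0)) (a := fun i j => (A (i, j) : nat))).
- by move=> i; apply/eqP/row1.
- by move=> j; apply/eqP/col1.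
move=> i j A_gt0; rewrite [LHS]surjective_pairing [RHS]surjective_pairing.
congr pair; [rewrite -arrangement_col | rewrite -arrangement_row].
  by rewrite (weighted_sum_eq1 _ (eqP (col1 j)) A_gt0).
by rewrite (weighted_sum_eq1 _ (eqP (row1 i)) A_gt0).
Qed.

End Arrangement.

Definition type_rank (l : seq (nat * nat)) : int := (sum_mult l)%:Z - (sum_base l)%:Z.

Lemma arr_gt0_rank l t : is_type l -> is_type t -> (0 < arr l t)%N ->
  type_rank t <= type_rank l /\ (type_rank t = type_rank l -> perm_eq l t).
Proof.
move=> l_type t_type; rewrite arrE card_gt0 => /set0Pn[A]; rewrite inE => A_arr.
have [le_mult eq_mult] := sum_mult_arrangement t_type A_arr.
have [le_base eq_base] := sum_base_arrangement l_type A_arr.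
rewrite /type_rank; split=> [|eq_rank]; first by rewrite lerB ?lez_nat.
have mult_eq : sum_mult t == sum_mult l by apply/eqP; lia.
have base_eq : sum_base l == sum_base t by apply/eqP; lia.
rewrite eq_mult in mult_eq; rewrite eq_base in base_eq.
exact: arrangement_perm A_arr mult_eq base_eq.
Qed.

Lemma arr_diag_gt0 l : is_type l -> (0 < arr l l)%N.
Proof.
move=> l_type; rewrite arrE card_gt0; apply/set0Pn.
have delta_val (i j : 'I_(size l)) : (inord (i == j) : 'I_(sum_mult l).+1) = (i == j) :> nat.
  rewrite inordK // ltnS /sum_mult (sum_ord_nth (0, 0)) (bigD1 i) //=; case: eqP => // _.
  by apply: leq_trans (leq_addr _ _); have [] := is_type_nth l_type (ltn_ord i).
exists [ffun ij => inord (ij.1 == ij.2)]; rewrite inE.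
apply/andP; split; apply/forallP => i; apply/eqP; rewrite (bigD1 i) //= ffunE delta_val eqxx mul1n.
  by rewrite big1 ?addn0 // => j /negbTE ji; rewrite ffunE delta_val eq_sym ji.
by rewrite big1 ?addn0 // => j /negbTE ji; rewrite ffunE delta_val ji.
Qed.

Lemma amx_unit d : amx d \in unitmx.
Proof.
rewrite -row_free_unit; apply: inj_row_free => v vA0; apply/eqP/rV0Pn => -[i1 v_i1].
set s := types d.
have s_types (i : 'I_(size s)) : is_type (nth [::] s i).
  by case: (types_mem (mem_nth [::] (ltn_ord i))).
pose rank i := type_rank (nth [::] s i).
have [i0 v_i0 i0_max] := @arg_maxP _ _ _ i1 (fun i => v 0 i != 0) rank v_i1.
have := congr1 (fun w : 'rV_(size s) => w 0 i0) vA0; rewrite !mxE (bigD1 i0) //= big1 ?addr0.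
  by apply/eqP; rewrite mxE mulf_neq0 // pnatr_eq0 -lt0n arr_diag_gt0.
move=> j j_i0; have [->|v_j] := eqVneq (v 0 j) 0; first by rewrite mul0r.
rewrite mxE; case: (posnP (arr (nth [::] s j) (nth [::] s i0))) => [->|arr_gt0].
  by rewrite mulr0.
have [le_rank eq_rank] := arr_gt0_rank (s_types j) (s_types i0) arr_gt0.
have rank_eq : rank i0 = rank j by apply/le_anti/andP; split; [exact: le_rank | exact: i0_max].
by have /types_nth_perm_inj j_eq := eq_rank rank_eq; rewrite j_eq eqxx in j_i0.
Qed.

Section Degree.
Variable deg : M -> nat.
Hypothesis deg_one : deg (@onecm nat) = 0%N.
Hypothesis deg_mul : forall x y : M, deg (mulcm x y) = (deg x + deg y)%N.

Lemma deg_big (T : Type) (r : seq T) (P : pred T) (F : T -> M) :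
  deg (\big[@mulcm nat/@onecm nat]_(j <- r | P j) F j) = (\sum_(j <- r | P j) deg (F j))%N.
Proof. exact: big_morph. Qed.

Lemma deg_expcmn (x : M) n : deg (expcmn x n) = (n * deg x)%N.
Proof.
case: n => [|n]; first by rewrite /expcmn /= deg_one.
elim: n => [|n IH]; first by rewrite /expcmn /= mul1n.
by rewrite [expcmn x n.+2]/expcmn /= -/(expcmn x n.+1) deg_mul IH mulSn.
Qed.



Lemma tdeg_type_of (x : M) : tdeg (type_of deg x) = deg x.
Proof.
have supp_x i : x i != 0%N -> exists k : 'I_(size (finsupp x)), nth 0%N (finsupp x) k = i.
  by rewrite cmE_neq0; exact: nth_ord_onto.
have supp_inj := nth_ord_inj (x0 := 0%N) erefl (fset_uniq (finsupp x)).
rewrite [in RHS](cmonom_prod_ucm supp_inj supp_x) deg_big.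
rewrite /tdeg /type_of big_map (sum_ord_nth 0%N).
by apply: eq_bigr => k _; rewrite deg_expcmn mulnC.
Qed.

Hypothesis deg_eq0 : forall b : M, deg b = 0%N -> b = @onecm nat.

Lemma type_of_is_type (x : M) : is_type (type_of deg x).
Proof.
apply/allP => p /mapP[i]; rewrite -cmE_neq0 -lt0n => x_i_gt0 -> /=.
rewrite x_i_gt0 andbT lt0n.
by apply/eqP => /deg_eq0 /eqP/cmP/(_ i); rewrite ucmE onecmE eqxx.
Qed.

End Degree.

Section Choices.
Variables (fib : nat -> seq M) (t : seq (nat * nat)).

(* A choice picks, for every part (c_j, n_j) of t, an index into [fib c_j]; all indices are
   drawn from one common range so that choices form a finType ([choice_ok] cuts out the genuine
   ones) over which the product of sums defining S_t expands. *)
Definition choice_bound : nat := (\sum_(p <- t) size (fib p.1)).+1.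

Definition choice_ok (j : 'I_(size t)) : pred 'I_choice_bound :=
  fun u => (u < size (fib (nth (0, 0) t j).1))%N.

Definition chosen (f : {ffun 'I_(size t) -> 'I_choice_bound}) (j : 'I_(size t)) : M :=
  nth (@onecm nat) (fib (nth (0, 0) t j).1) (f j).

Definition choice_monom (f : {ffun 'I_(size t) -> 'I_choice_bound}) : M :=
  \big[@mulcm nat/@onecm nat]_(j < size t) expcmn (chosen f j) (nth (0, 0) t j).2.

Definition choices (x : M) : {set {ffun 'I_(size t) -> 'I_choice_bound}} :=
  [set f | (f \in family choice_ok) && (choice_monom f == x)].

Lemma size_fib_lt_bound (j : 'I_(size t)) : (size (fib (nth (0, 0) t j).1) < choice_bound)%N.
Proof. by rewrite ltnS (sum_ord_nth (0, 0)) (bigD1 j) //= leq_addr. Qed.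

End Choices.

Section ChoicesArrangements.
Variables (deg : M -> nat) (fib : nat -> seq M).
Hypothesis deg_one : deg (@onecm nat) = 0%N.
Hypothesis deg_mul : forall x y : M, deg (mulcm x y) = (deg x + deg y)%N.
Hypothesis fibP : forall (d : nat) (b : M), (b \in fib d) = (deg b == d).
Hypothesis fib_uniq : forall d : nat, uniq (fib d).

Variables (t : seq (nat * nat)) (x : M) (s : seq nat).
Hypotheses (t_type : is_type t) (s_uniq : uniq s).
Hypothesis s_supp : forall i, (i \in s) = (x i != 0%N).

Local Notation F := (fun i : nat => (deg (ucm i), x i)).
Local Notation l := [seq F i | i <- s].
Local Notation c j := (nth (0, 0) t j).1.
Local Notation n j := (nth (0, 0) t j).2.
Local Notation Ffun := {ffun 'I_(size t) -> 'I_(choice_bound fib t)}.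
Local Notation Amx := {ffun 'I_(size l) * 'I_(size t) -> 'I_(sum_mult l).+1}.

Let g (i : 'I_(size l)) : nat := nth 0%N s i.

Let g_inj : injective g.
Proof. exact: nth_ord_inj (esym (size_map F s)) s_uniq. Qed.

Let g_onto y : x y != 0%N -> exists i, g i = y.
Proof. by rewrite -s_supp; exact: nth_ord_onto (esym (size_map F s)). Qed.

Let nth_l (i : 'I_(size l)) : nth (0, 0) l i = F (g i).
Proof. by rewrite (nth_map 0%N) // -(size_map F). Qed.

Definition column_monom (A : Amx) (j : 'I_(size t)) : M :=
  \big[@mulcm nat/@onecm nat]_(i < size l) expcmn (ucm (g i)) (A (i, j)).

Let column_monomE A j i : column_monom A j (g i) = A (i, j).
Proof. exact: prod_ucmE_image. Qed.

Let deg_column_monom A j : deg (column_monom A j) = (\sum_i A (i, j) * (nth (0, 0) l i).1)%N.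
Proof. by rewrite deg_big //; apply: eq_bigr => i _; rewrite deg_expcmn // nth_l. Qed.

Let column_monom_fib A j : is_arrangement A -> column_monom A j \in fib (c j).
Proof. by move=> A_arr; rewrite fibP deg_column_monom (arrangement_col A_arr). Qed.

Definition choice_of_arr (A : Amx) : Ffun :=
  [ffun j => inord (index (column_monom A j) (fib (c j)))].

Definition arr_of_choice (f : Ffun) : Amx := [ffun ij => inord (chosen f ij.2 (g ij.1))].

Let choice_of_arrE A j : is_arrangement A ->
  (choice_of_arr A j : nat) = index (column_monom A j) (fib (c j)).
Proof.
move=> A_arr; rewrite ffunE inordK // (leq_trans _ (size_fib_lt_bound fib j)) //.
by rewrite ltnS index_size.
Qed.

Let chosen_choice_of_arr A j : is_arrangement A -> chosen (choice_of_arr A) j = column_monom A j.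
Proof. by move=> A_arr; rewrite /chosen choice_of_arrE // nth_index // column_monom_fib. Qed.

Let choice_of_arr_in A : is_arrangement A -> choice_of_arr A \in choices fib t x.
Proof.
move=> A_arr; rewrite inE; apply/andP; split.
  by apply/familyP => j; rewrite unfold_in /choice_ok choice_of_arrE // index_mem column_monom_fib.
apply/cmP => y; rewrite /choice_monom bigcmE.
under eq_bigr => j _ do rewrite expcmnE chosen_choice_of_arr //.
case: (boolP [exists i, g i == y]) => [/existsP[i /eqP <-]|/existsPn gNy].
  have := arrangement_row A_arr i; rewrite nth_l /= => <-.
  by apply: eq_bigr => j _; rewrite column_monomE mulnC.
rewrite big1 => [|j _]; last by rewrite prod_ucmE_out ?muln0.
apply/esym/eqP; apply: contraT => /g_onto[i gi].
by have := gNy i; rewrite gi eqxx.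
Qed.

Let choicesE f y : f \in choices fib t x -> x y = (\sum_(j < size t) n j * chosen f j y)%N.
Proof.
by rewrite inE => /andP[_ /eqP <-]; rewrite bigcmE; apply: eq_bigr => j _; rewrite expcmnE.
Qed.

Let chosen_le f j y : f \in choices fib t x -> (chosen f j y <= x y)%N.
Proof.
move=> f_in; rewrite (choicesE y f_in) (bigD1 j) //= (leq_trans _ (leq_addr _ _)) //.
by rewrite leq_pmull //; have [] := is_type_nth t_type (ltn_ord j).
Qed.

Let chosen_decomp f j : f \in choices fib t x ->
  chosen f j = \big[@mulcm nat/@onecm nat]_(i < size l) expcmn (ucm (g i)) (chosen f j (g i)).
Proof.
move=> f_in; apply: (cmonom_prod_ucm g_inj) => y chosen_y; apply: g_onto.
by rewrite -lt0n (leq_trans _ (chosen_le j y f_in)) // lt0n.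
Qed.

Let arr_of_choiceE f i j : f \in choices fib t x ->
  (arr_of_choice f (i, j) : nat) = chosen f j (g i).
Proof.
move=> f_in; rewrite ffunE inordK //= ltnS (leq_trans (chosen_le j _ f_in)) //.
have -> : x (g i) = (nth (0, 0) l i).2 by rewrite nth_l.
by rewrite /sum_mult (sum_ord_nth (0, 0)) (bigD1 i) //= leq_addr.
Qed.

Let column_monom_arr_of_choice f j : f \in choices fib t x ->
  column_monom (arr_of_choice f) j = chosen f j.
Proof.
by move=> f_in; rewrite [RHS](chosen_decomp j f_in); apply: eq_bigr => i _; rewrite arr_of_choiceE.
Qed.

Let arr_of_choice_in f : f \in choices fib t x -> is_arrangement (arr_of_choice f).
Proof.
move=> f_in; apply/andP; split.
  apply/forallP => i; apply/eqP; rewrite nth_l /= (choicesE _ f_in); apply: eq_bigr => j _.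
  by rewrite arr_of_choiceE // mulnC.
apply/forallP => j; apply/eqP.
have /familyP/(_ j) f_ok : f \in family (@choice_ok fib t) by move: f_in; rewrite inE => /andP[].
have /eqP <- : deg (chosen f j) == c j by rewrite -fibP /chosen mem_nth.
rewrite -(column_monom_arr_of_choice j f_in) deg_column_monom.
by apply: eq_bigr => i _.
Qed.

Lemma card_choices : #|choices fib t x| = arr l t.
Proof.
rewrite arrE; apply: (@card_in_bij _ _ _ _ arr_of_choice choice_of_arr).
- by move=> f f_in; rewrite inE arr_of_choice_in.
- by move=> A; rewrite inE; exact: choice_of_arr_in.
- move=> f f_in; apply/ffunP => j; apply: ord_inj.
  rewrite choice_of_arrE ?arr_of_choice_in // column_monom_arr_of_choice //.
  have /familyP/(_ j) f_ok : f \in family (@choice_ok fib t) by move: f_in; rewrite inE => /andP[].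
  by rewrite /chosen index_uniq.
- move=> A; rewrite inE => A_arr; apply/ffunP => -[i j]; apply: ord_inj.
  by rewrite arr_of_choiceE ?choice_of_arr_in // chosen_choice_of_arr // column_monomE.
Qed.

End ChoicesArrangements.

Section MonoidAlgebra.
Variable R : comNzRingType.

Lemma malgU_mulcm (a b : M) : << mulcm a b >> = << a >> * << b >> :> {malg R[M]}.
Proof. by rewrite malgM_def fgmulUU mulr1. Qed.

Lemma malgU_prod (T : Type) (r : seq T) (F : T -> M) :
  \prod_(j <- r) << F j >> = << \big[@mulcm nat/@onecm nat]_(j <- r) F j >> :> {malg R[M]}.
Proof.
apply/esym/(big_morph (fun m : M => << m >> : {malg R[M]})); first exact: malgU_mulcm.
by rewrite -mpolyC1E.
Qed.

Lemma psi_sumU m (L : seq M) :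
  psi m (\sum_(b <- L) << b >> : {malg R[M]}) = \sum_(b <- L) << expcmn b m >>.
Proof.
have psiE g : psi m g = mmap (@mkmalgU M R (@onecm nat)) (fun k => << expcmn k m >>) g.
  by rewrite /psi mmapE; apply: eq_bigr => k _; rewrite malgM_def fgmulUU mulr1 mul1m.
rewrite psiE raddf_sum /=; apply: eq_bigr => b _.
by rewrite mmapE msuppU1 big_seq_fset1 mcoeffUU mpolyC1E mul1r.
Qed.

Lemma mcoeff_sumU (L : seq M) (P : pred M) x : uniq L ->
  (\sum_(b <- L | P b) << b >> : {malg R[M]})@_x = ((x \in L) && P x)%:R.
Proof.
elim: L => [|b L IH]; first by rewrite big_nil mcoeff0.
case/andP => bNL L_uniq; rewrite big_cons inE eq_sym.
case: ifP => Pb; rewrite ?mcoeffD IH // ?mcoeffU1; have [<-|bNx] := eqVneq b x.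
- by rewrite (negbTE bNL) Pb addr0.
- by rewrite add0r.
- by rewrite (negbTE bNL) Pb.
- by [].
Qed.

Lemma mcoeff_St fib t x : (St R fib t)@_x = (#|choices fib t x|)%:R.
Proof.
rewrite /St; under eq_bigr => p _ do rewrite psi_sumU.
rewrite (big_nth (0%N, 0%N)) big_mkord.
have sum_choice (j : 'I_(size t)) :
    \sum_(b <- fib (nth (0, 0) t j).1) << expcmn b (nth (0, 0) t j).2 >>
    = \sum_(u < choice_bound fib t | choice_ok j u)
        << expcmn (nth (@onecm nat) (fib (nth (0, 0) t j).1) u) (nth (0, 0) t j).2 >>
      :> {malg R[M]}.
  rewrite (big_nth (@onecm nat)) big_mkord.
  exact: (big_ord_widen _ (fun u => << expcmn (nth _ _ u) _ >>) (ltnW (size_fib_lt_bound fib j))).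
under eq_bigr => j _ do rewrite sum_choice.
rewrite bigA_distr_big_dep /=; under eq_bigr => f _ do rewrite malgU_prod.
rewrite raddf_sum /=; under eq_bigr => f _ do rewrite mcoeffU1.
rewrite -natr_sum -sum1_card; congr _%:R; rewrite [LHS]big_mkcond [RHS]big_mkcond /=.
by apply: eq_bigr => f _; rewrite in_set; case: ifP.
Qed.

End MonoidAlgebra.

Definition mcst1 (m : M) : rat := 1.

Lemma mcst1_mmorphism : mmorphism mcst1.
Proof. by split => // a b; rewrite /mcst1 mulr1. Qed.

HB.instance Definition _ := isMultiplicative.Build _ _ mcst1 mcst1_mmorphism.

Local Notation augmentation := (mmap (@idfun rat) mcst1).

Lemma augmentationU (b : M) : augmentation << b >> = 1.
Proof. by rewrite mmapE msuppU1 big_seq_fset1 mcoeffUU /mcst1 mulr1. Qed.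

Lemma augmentation_sumU (T : Type) (L : seq T) (P : pred T) (F : T -> M) :
  augmentation (\sum_(b <- L | P b) << F b >>) = (count P L)%:R.
Proof.
rewrite raddf_sum /=; under eq_bigr => b _ do rewrite augmentationU.
by rewrite -sum1_count natr_sum.
Qed.

Section Identities.
Variables (deg : M -> nat) (fib : nat -> seq M).
Hypothesis deg_one : deg (@onecm nat) = 0%N.
Hypothesis deg_mul : forall x y : M, deg (mulcm x y) = (deg x + deg y)%N.
Hypothesis deg_eq0 : forall b : M, deg b = 0%N -> b = @onecm nat.
Hypothesis fibP : forall (d : nat) (b : M), (b \in fib d) = (deg b == d).
Hypothesis fib_uniq : forall d : nat, uniq (fib d).

Lemma choices_deg t x f : f \in choices fib t x -> deg x = tdeg t.
Proof.
rewrite inE => /andP[/familyP f_ok /eqP <-].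
rewrite deg_big // /tdeg (sum_ord_nth (0, 0)); apply: eq_bigr => j _.
have /eqP deg_chosen : deg (chosen f j) == (nth (0, 0) t j).1.
  by rewrite -fibP /chosen mem_nth //; exact: f_ok.
by rewrite deg_expcmn // deg_chosen mulnC.
Qed.

Lemma card_choices_type t x l : is_type t -> perm_eq l (type_of deg x) ->
  #|choices fib t x| = arr l t.
Proof.
move=> t_type; rewrite /type_of; set F := fun i => (deg (ucm i), x i).
case/(perm_iotaP (0%N, 0%N)) => Is; rewrite size_map => Is_perm ->.
set s := [seq nth 0%N (finsupp x) i | i <- Is].
have s_perm : perm_eq s (finsupp x).
  by rewrite -[X in perm_eq _ X](mkseq_nth 0%N); exact: perm_map.
have -> : [seq nth (0%N, 0%N) [seq F i | i <- finsupp x] i | i <- Is] = [seq F i | i <- s].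
  rewrite -map_comp; apply/eq_in_map => i; rewrite (perm_mem Is_perm) mem_iota /= => lt_i.
  by rewrite (nth_map 0%N).
apply: card_choices => //; first by rewrite (perm_uniq s_perm) fset_uniq.
by move=> i; rewrite (perm_mem s_perm) cmE_neq0.
Qed.

Lemma mcoeff_Xt (R : comNzRingType) l x :
  (Xt R deg fib l)@_x = ((x \in fib (tdeg l)) && perm_eq (type_of deg x) l)%:R.
Proof. exact: mcoeff_sumU. Qed.

Lemma Xt_perm (R : comNzRingType) l l' : perm_eq l l' -> Xt R deg fib l = Xt R deg fib l'.
Proof.
by move=> ll'; rewrite /Xt /tdeg (perm_big _ ll'); apply: eq_bigl => b; apply: (permPr ll').
Qed.

Lemma St_expansion (R : comNzRingType) t : is_type t ->
  St R fib t = \sum_(l <- types (tdeg t)) Xt R deg fib l *+ arr l t.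
Proof.
move=> t_type; apply/malgP => x; set d := tdeg t.
rewrite mcoeff_St raddf_sum /= big_seq.
under eq_bigr => l /types_mem[_ deg_l] do rewrite mcoeffMn mcoeff_Xt deg_l -mulrnA.
rewrite -big_seq -natr_sum; congr _%:R.
have [x_d|x_Nd] := boolP (x \in fib d); last first.
  rewrite big1 //.
  by apply: eq_card0 => f; apply/negP => /choices_deg deg_x; rewrite fibP deg_x eqxx in x_Nd.
transitivity (\sum_(l <- types d) perm_eq (type_of deg x) l * #|choices fib t x|)%N.
  rewrite -big_distrl /= sum_nat_of_bool -[LHS]mul1n; congr (_ * _)%N.
  apply/eqP; rewrite eqn_leq types_count andbT -has_count.
  have [l0 l0_types l0_perm] := types_exists (type_of_is_type deg_eq0 x).
  apply/hasP; exists l0 => //.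
  by move: x_d l0_types; rewrite fibP tdeg_type_of // => /eqP ->.
apply: eq_bigr => l _; case: (boolP (perm_eq _ l)) => //= x_l.
by rewrite !mul1n (card_choices_type (l := l) t_type) // perm_sym.
Qed.

Lemma Xt_expansion t : is_type t ->
  Xt rat deg fib t = \sum_(l <- types (tdeg t)) ainv (tdeg t) l t *: St rat fib l.
Proof.
move=> t_type; set d := tdeg t; set s := types d.
have [j0 idx_t t_j0] := type_idxP t_type.
have St_nth (i : 'I_(size s)) : St rat fib (nth [::] s i) =
    \sum_(k < size s) (amx d k i) *: Xt rat deg fib (nth [::] s k).
  have [i_type deg_i] := types_mem (mem_nth [::] (ltn_ord i)).
  rewrite St_expansion // deg_i (big_nth [::]) big_mkord.
  by apply: eq_bigr => k _; rewrite mxE scaler_nat.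
rewrite (big_nth [::]) big_mkord.
transitivity (\sum_(k < size s) (amx d *m invmx (amx d)) k j0 *: Xt rat deg fib (nth [::] s k)).
  rewrite mulmxV ?amx_unit // (bigD1 j0) //= mxE eqxx scale1r big1 ?addr0.
    exact: Xt_perm.
  by move=> k /negbTE k_j0; rewrite mxE k_j0 scale0r.
under [RHS]eq_bigr => i _ do rewrite /ainv type_idx_nth idx_t St_nth scaler_sumr.
rewrite [RHS]exchange_big /=; apply: eq_bigr => k _.
by rewrite mxE scaler_suml; apply: eq_bigr => i _; rewrite scalerA mulrC.
Qed.

Lemma count_type_eq l : is_type l ->
  (count (fun b => perm_eq (type_of deg b) l) (fib (tdeg l)))%:R
    = \sum_(t <- types (tdeg l)) ainv (tdeg l) t l * \prod_(p <- t) (size (fib p.1))%:R :> rat.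
Proof.
move=> l_type; rewrite -(augmentation_sumU _ _ (fun b => b)).
rewrite -[\sum_(b <- _ | _) _]/(Xt rat deg fib l).
rewrite Xt_expansion // raddf_sum /=; apply: eq_bigr => t _.
rewrite mmapZ /= rmorph_prod /=; congr (_ * _); apply: eq_bigr => p _.
by rewrite psi_sumU augmentation_sumU count_predT.
Qed.

End Identities.

Theorem theorem5
  (deg : M -> nat) (fib : nat -> seq M)
  (deg_one : deg (@onecm nat) = 0%N)
  (deg_mul : forall x y : M, deg (mulcm x y) = (deg x + deg y)%N)
  (deg_eq0 : forall b : M, deg b = 0%N -> b = @onecm nat)
  (fibP : forall (d : nat) (b : M), (b \in fib d) = (deg b == d))
  (fib_uniq : forall d : nat, uniq (fib d)) :
  (forall d : nat, amx d \in unitmx) /\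
  (forall tau, is_type tau ->
     @St int fib tau
       = \sum_(l <- types (tdeg tau)) @Xt int deg fib l *+ arr l tau) /\
  (forall tau, is_type tau ->
     @Xt rat deg fib tau
       = \sum_(l <- types (tdeg tau)) ainv (tdeg tau) l tau *: @St rat fib l) /\
  (forall lam, is_type lam ->
     (count (fun b => perm_eq (type_of deg b) lam) (fib (tdeg lam)))%:R
       = \sum_(t <- types (tdeg lam))
           ainv (tdeg lam) t lam * \prod_(p <- t) (size (fib p.1))%:R :> rat).
Proof.
split; first exact: amx_unit.
split; first exact: St_expansion.
split; first exact: Xt_expansion.
exact: count_type_eq.
Qed.
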